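(* Let $K$ be a field and $\nu$ a valuation on $K[x]$. Every key polynomial for $\nu$ is irreducible in $K[x]$.
   Context: $\nu:K[x]\to\Gamma\cup\{\infty\}$ is a valuation ($\Gamma$ an ordered abelian group) with $\nu(f)=\infty$ only for $f=0$; $\Gamma'=\Gamma\otimes\mathbb{Q}$. For $k\in\mathbb{N}$, $\partial_kf=\frac{1}{k!}\frac{d^kf}{dx^k}$. For nonconstant $f$, $\epsilon(f)=\max\{(\nu(f)-\nu(\partial_kf))/k\mid 1\le k\le\deg f,\ \partial_kf\ne0\}\in\Gamma'$. A key polynomial is a monic nonconstant $Q\in K[x]$ such that every nonconstant $f\in K[x]$ with $\epsilon(f)\ge\epsilon(Q)$ satisfies $\deg f\ge\deg Q$. *)

From mathcomp Require Import all_boot all_order all_algebra.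
Set Implicit Arguments. Unset Strict Implicit. Unset Printing Implicit Defensive.
Import GRing.Theory.
Local Open Scope ring_scope.

Record is_ordered_group (G : zmodType) (le : rel G) : Prop := {
  og_refl : forall a, le a a;
  og_antisym : forall a b, le a b -> le b a -> a = b;
  og_trans : forall a b c, le a b -> le b c -> le a c;
  og_total : forall a b, le a b || le b a;
  og_add : forall a b c, le a b -> le (a + c) (b + c) }.

(* Gamma u {oo} is [option G], with [None] = oo. *)
Definition leo (G : zmodType) (le : rel G) (x y : option G) : bool :=
  match x, y with
  | _, None => true
  | None, Some _ => false
  | Some a, Some b => le a b
  end.

Definition addo (G : zmodType) (x y : option G) : option G :=
  match x, y with
  | Some a, Some b => Some (a + b)
  | _, _ => None
  end.

Record is_valuation (K : fieldType) (G : zmodType) (le : rel G)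
    (nu : {poly K} -> option G) : Prop := {
  val_inf : forall f, nu f = None <-> f = 0;
  val_mul : forall f g, nu (f * g) = addo (nu f) (nu g);
  val_add : forall f g, leo le (nu f) (nu (f + g)) || leo le (nu g) (nu (f + g)) }.

(* Elements of Gamma' = Gamma (x) Q are represented as formal fractions
   (gamma, m) standing for gamma / m with m > 0; the order is
   gamma/m <= delta/n  iff  n*gamma <= m*delta. *)
Definition fle (G : zmodType) (le : rel G) (x y : G * nat) : bool :=
  le (x.1 *+ y.2) (y.1 *+ x.2).

Definition fmax (G : zmodType) (le : rel G) (x y : G * nat) : G * nat :=
  if fle le x y then y else x.

Definition fval (K : fieldType) (G : zmodType) (nu : {poly K} -> option G)
  (f : {poly K}) : G := odflt 0 (nu f).

Definition eps_term (K : fieldType) (G : zmodType) (nu : {poly K} -> option G)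
  (f : {poly K}) (k : nat) : G * nat :=
  (fval nu f - fval nu f^`N(k), k).

(* epsilon(f) = max { (nu f - nu d_k f)/k | 1 <= k <= deg f, d_k f <> 0 }.
   The term k = deg f is always present (d_{deg f} f = lead coef <> 0). *)
Definition epsilon (K : fieldType) (G : zmodType) (le : rel G)
  (nu : {poly K} -> option G) (f : {poly K}) : G * nat :=
  foldr (fmax le) (eps_term nu f (size f).-1)
    [seq eps_term nu f k | k <- iota 1 (size f).-1 & f^`N(k) != 0].

Definition key_poly (K : fieldType) (G : zmodType) (le : rel G)
  (nu : {poly K} -> option G) (Q : {poly K}) : Prop :=
  [/\ Q \is monic, (1 < size Q)%N &
      forall f : {poly K}, (1 < size f)%N ->
        fle le (epsilon le nu Q) (epsilon le nu f) -> (size Q <= size f)%N].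

From mathcomp Require Import all_boot all_order all_algebra.
From mathcomp Require Import ring.
Local Open Scope ring_scope.

(* Write eps(f) <= M, for a slope M = e/m of Gamma', as the family of
   inequalities  m (nu f - nu d_k f) <= k e  for every k >= 1 with d_k f != 0
   (lemma [epsilon_leP]).  The Leibniz rule for Hasse derivatives,
   d_k (g h) = sum_(i+j=k) d_i g * d_j h, and the ultrametric inequality show
   that some summand has  nu d_k (g h) >= nu d_i g + nu d_j h,  hence
   eps(g h) <= max (eps g, eps h)  ([epsilon_mul_le]).  If a key polynomial
   Q factored as Q = r q with r, q nonconstant, the factor of larger epsilon
   would satisfy eps(Q) <= eps(factor) with deg(factor) < deg Q,
   contradicting the definition of a key polynomial. *)

Set Implicit Arguments.
Unset Strict Implicit.
Unset Printing Implicit Defensive.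
Import GRing.Theory.

Section OrderedGroup.
Variables (G : zmodType) (le : rel G).
Hypothesis Hle : is_ordered_group le.

Lemma le_refl a : le a a. Proof. exact: og_refl Hle a. Qed.

Lemma le_trans a b c : le a b -> le b c -> le a c. Proof. exact: og_trans. Qed.

Lemma le_add a b c d : le a b -> le c d -> le (a + c) (b + d).
Proof.
move=> hab hcd; apply: le_trans (og_add Hle c hab) _.
by rewrite !(addrC b); apply: og_add.
Qed.

Lemma le_opp a b : le a b -> le (- b) (- a).
Proof.
move=> h; have := og_add Hle (- a - b) h.
by rewrite addrA subrr add0r addrCA subrr addr0.
Qed.

Lemma le_muln n a b : le a b -> le (a *+ n) (b *+ n).
Proof.
by move=> h; elim: n => [|n IH]; rewrite ?mulr0n ?le_refl // !mulrS le_add.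
Qed.

(* Ordered abelian groups are torsion-free: multiplication by n > 0 reflects
   the order.  This is what makes the fraction order on Gamma' transitive. *)
Lemma le_muln_cancel n a b : (0 < n)%N -> le (a *+ n) (b *+ n) -> le a b.
Proof.
move=> n_gt0 hn; case/orP: (og_total Hle a b) => // hba.
have eq_n : a *+ n = b *+ n by apply: (og_antisym Hle) => //; apply: le_muln.
have d_ge0 : le 0 (a - b) by have := og_add Hle (- b) hba; rewrite subrr.
have dn_ge0 k : le 0 ((a - b) *+ k).
  by elim: k => [|k IH]; rewrite ?mulr0n ?le_refl // mulrS -[0]addr0 le_add.
have d_le0 : le (a - b) 0.
  have dn0 : (a - b) *+ n = 0 by rewrite mulrnBl eq_n subrr.
  rewrite -dn0 -(prednK n_gt0) mulrS.
  by rewrite -{1}[a - b]addr0 le_add ?le_refl ?dn_ge0.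
have : a - b = 0 by apply: (og_antisym Hle).
by move/eqP; rewrite subr_eq0 => /eqP ->; apply: le_refl.
Qed.

Lemma fle_refl x : fle le x x. Proof. exact: le_refl. Qed.

Lemma fle_total x y : fle le x y || fle le y x. Proof. exact: og_total. Qed.

Lemma fle_trans x y z : (0 < y.2)%N -> fle le x y -> fle le y z -> fle le x z.
Proof.
rewrite /fle => y2_gt0 hxy hyz; apply: (le_muln_cancel y2_gt0).
have := le_muln z.2 hxy; have := le_muln x.2 hyz; rewrite -!mulrnA.
rewrite (mulnC z.2 x.2) (mulnC y.2 x.2) (mulnC z.2 y.2) => h2 h1.
exact: le_trans h1 h2.
Qed.

Lemma foldr_fmax_ind (P : G * nat -> Prop) d s :
  P d -> (forall t, t \in s -> P t) -> P (foldr (fmax le) d s).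
Proof.
elim: s => //= x s IH Pd Ps; rewrite /fmax; case: ifP => _.
  by apply: IH => // t ts; apply: Ps; rewrite inE ts orbT.
by apply: Ps; rewrite inE eqxx.
Qed.

Lemma foldr_fmax_ub d s : (forall t, t \in d :: s -> (0 < t.2)%N) ->
  forall t, t \in d :: s -> fle le t (foldr (fmax le) d s).
Proof.
elim: s => [|x s IH] pos t ht.
  by move: ht; rewrite inE => /eqP ->; apply: fle_refl.
have pos' u : u \in d :: s -> (0 < u.2)%N.
  by move=> us; apply: pos; move: us; rewrite !inE => /orP [] ->; rewrite ?orbT.
have IHs := IH pos'; set r := foldr (fmax le) d s in IHs *.
have r_pos : (0 < r.2)%N.
  apply: (foldr_fmax_ind (P := fun u => (0 < u.2)%N)) => [|u us]; apply: pos'.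
    by rewrite inE eqxx.
  by rewrite inE us orbT.
have t_cases : t = x \/ t \in d :: s.
  by move: ht; rewrite !inE => /or3P [->|/eqP->|->]; rewrite ?orbT; auto.
rewrite /= /fmax; case: ifP => hxr.
  by case: t_cases => [-> | /IHs].
have hrx : fle le r x by case/orP: (fle_total x r); rewrite ?hxr.
case: t_cases => [-> | /IHs htr]; first exact: fle_refl.
exact: fle_trans r_pos htr hrx.
Qed.

End OrderedGroup.

Lemma nderivnM (R : comNzRingType) (p q : {poly R}) k :
  (p * q)^`N(k) = \sum_(i < k.+1) p^`N(i) * q^`N(k - i).
Proof.
elim/poly_ind: p k => [|p c IH] k.
  rewrite mul0r nderivn_poly0 ?size_poly0 // big1 // => i _.
  by rewrite nderivn_poly0 ?size_poly0 // mul0r.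
rewrite mulrDl mulrAC; case: k => [|k].
  by rewrite big_ord_recl big_ord0 !nderivn0 addr0 mulrDl mulrAC.
have nderivnMX (r : {poly R}) n : (r * 'X)^`N(n.+1) = r^`N(n) + r^`N(n.+1) * 'X.
  by have := nderivnMXaddC n r 0; rewrite polyC0 addr0.
rewrite nderivnD nderivnMX mul_polyC nderivnZ -mul_polyC !IH.
rewrite !(big_ord_recl k.+1) !nderivn0 !subn0.
have shift : \sum_(i < k.+1) p^`N(lift ord0 i) * q^`N(k.+1 - lift ord0 i)
             = \sum_(i < k.+1) p^`N(i.+1) * q^`N(k - i).
  by apply: eq_bigr => i _; rewrite lift0 subSS.
rewrite shift.
under [in RHS]eq_bigr => i _ do rewrite lift0 nderivnMXaddC subSS mulrDl.
rewrite big_split /=.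
have -> : \sum_(i < k.+1) p^`N(i.+1) * 'X * q^`N(k - i)
          = (\sum_(i < k.+1) p^`N(i.+1) * q^`N(k - i)) * 'X.
  by rewrite mulr_suml; apply: eq_bigr => i _; rewrite mulrAC.
ring.
Qed.

Section Valuation.
Variables (K : fieldType) (G : zmodType) (le : rel G).
Hypothesis Hle : is_ordered_group le.
Variable nu : {poly K} -> option G.
Hypothesis Hnu : is_valuation le nu.

Lemma fvalE f : f != 0 -> nu f = Some (fval nu f).
Proof.
rewrite /fval; case E: (nu f) => [a|] //=.
by move/(val_inf Hnu): E => ->; rewrite eqxx.
Qed.

Lemma nu0 : nu 0 = None. Proof. exact/(val_inf Hnu). Qed.

Lemma fvalM f g : f != 0 -> g != 0 -> fval nu (f * g) = fval nu f + fval nu g.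
Proof. by move=> f0 g0; rewrite {1}/fval (val_mul Hnu) (fvalE f0) (fvalE g0). Qed.

Lemma ultrametric_sum (I : Type) (r : seq I) (F : I -> {poly K}) :
  \sum_(i <- r) F i != 0 ->
  exists2 i, F i != 0 & le (fval nu (F i)) (fval nu (\sum_(i <- r) F i)).
Proof.
elim: r => [|x r IH]; first by rewrite big_nil eqxx.
rewrite big_cons => sum0; have := val_add Hnu (F x) (\sum_(i <- r) F i).
rewrite (fvalE sum0); case/orP => h.
  have Fx0 : F x != 0 by apply: contraTneq h => ->; rewrite nu0.
  by exists x; move: h; rewrite (fvalE Fx0).
have S0 : \sum_(i <- r) F i != 0 by apply: contraTneq h => ->; rewrite nu0.
have [i Fi0 hi] := IH S0; exists i => //.
by apply: (le_trans Hle hi); move: h; rewrite (fvalE S0).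
Qed.

Definition eps_bounded (f : {poly K}) (M : G * nat) : Prop :=
  forall k, (0 < k)%N -> f^`N(k) != 0 -> fle le (eps_term nu f k) M.

(* The top Hasse derivative d_(deg f) f is the leading coefficient, so the
   term k = deg f always occurs in the definition of epsilon. *)
Lemma nderivn_size_pred (f : {poly K}) : f != 0 -> f^`N((size f).-1) != 0.
Proof.
move=> f0; apply: contra f0 => /eqP/(congr1 (fun p : {poly K} => p`_0)).
rewrite coef_nderivn addn0 binn mulr1n coef0 -lead_coefE => /eqP.
by rewrite lead_coef_eq0.
Qed.

Lemma epsilon_leP (f : {poly K}) M : (1 < size f)%N ->
  fle le (epsilon le nu f) M <-> eps_bounded f M.
Proof.
move=> sf; have f0 : f != 0 by rewrite -size_poly_gt0 ltnW.
have top_gt0 : (0 < (size f).-1)%N by rewrite -ltnS prednK // ltnW.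
set terms := [seq eps_term nu f k | k <- iota 1 (size f).-1 & f^`N(k) != 0].
have -> : epsilon le nu f = foldr (fmax le) (eps_term nu f (size f).-1) terms by [].
have in_terms t : t \in terms ->
    exists2 k, (0 < k)%N /\ f^`N(k) != 0 & t = eps_term nu f k.
  case/mapP => k; rewrite mem_filter mem_iota => /andP [fk /andP [k_gt0 _]] ->.
  by exists k.
have pos t : t \in eps_term nu f (size f).-1 :: terms -> (0 < t.2)%N.
  by rewrite inE => /orP [/eqP -> // | /in_terms [k [k_gt0 _] ->]].
split=> [hM k k_gt0 fk | hM].
  have max_pos : (0 < (foldr (fmax le) (eps_term nu f (size f).-1) terms).2)%N.
    apply: (@foldr_fmax_ind _ le (fun t => (0 < t.2)%N)) => [|t t_in]; apply: pos.
      by rewrite inE eqxx.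
    by rewrite inE t_in orbT.
  apply: (fle_trans Hle max_pos _ hM).
  apply: (foldr_fmax_ub Hle pos).
  rewrite inE; apply/orP; right; apply/mapP; exists k => //.
  rewrite mem_filter fk mem_iota k_gt0 add1n prednK /=; last exact: ltnW.
  by apply: contraR fk; rewrite -leqNgt => /nderivn_poly0 ->.
apply: (@foldr_fmax_ind _ le (fle le ^~ M)) => [|t /in_terms [k [k_gt0 fk] ->]].
  exact: hM top_gt0 (nderivn_size_pred f0).
exact: hM.
Qed.

Lemma eps_bounded_mul (g h : {poly K}) (e : G) (m : nat) : g != 0 -> h != 0 ->
  eps_bounded g (e, m) -> eps_bounded h (e, m) -> eps_bounded (g * h) (e, m).
Proof.
move=> g0 h0 Hg Hh.
have slope_le (f : {poly K}) i : eps_bounded f (e, m) -> f^`N(i) != 0 ->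
    le ((fval nu f - fval nu f^`N(i)) *+ m) (e *+ i).
  by case: i => [|i] Hf fi; [rewrite nderivn0 subrr mul0rn mulr0n le_refl | exact: Hf].
move=> k _; rewrite /fle /eps_term /= nderivnM => dk0.
have [i] := ultrametric_sum dk0; rewrite mulf_eq0 negb_or => /andP [gi hj].
rewrite !fvalM // => hi.
have -> : e *+ k = e *+ i + e *+ (k - i) by rewrite -mulrnDr subnKC // -ltnS.
apply: (le_trans Hle _ (le_add Hle (slope_le g i Hg gi) (slope_le h _ Hh hj))).
rewrite -mulrnDl; apply: (le_muln Hle).
rewrite addrACA -opprD; apply: (le_add Hle (le_refl Hle _)).
exact: le_opp.
Qed.

(* Submultiplicativity of epsilon: eps(g h) <= max (eps g, eps h), phrased
   as: eps(g h) <= M as soon as eps(g) <= M and eps(h) <= M. *)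
Lemma epsilon_mul_le (g h : {poly K}) M : (1 < size g)%N -> (1 < size h)%N ->
  fle le (epsilon le nu g) M -> fle le (epsilon le nu h) M ->
  fle le (epsilon le nu (g * h)) M.
Proof.
move=> sg sh; have g0 : g != 0 by rewrite -size_poly_gt0 ltnW.
have h0 : h != 0 by rewrite -size_poly_gt0 ltnW.
have sgh : (1 < size (g * h)%R)%N.
  by rewrite size_mul // -subn1 ltn_subRL addn1 (leq_add sg (ltnW sh)).
case: M => e m; rewrite !epsilon_leP //.
exact: eps_bounded_mul.
Qed.

End Valuation.

Theorem corollary4p4 (K : fieldType) (G : zmodType) (le : rel G)
  (Hle : is_ordered_group le) (nu : {poly K} -> option G)
  (Hnu : is_valuation le nu) (Q : {poly K}) :
  key_poly le nu Q -> irreducible_poly Q.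
Proof.
case=> _ sQ key; split => // q sq1 /dvdpP [r defQ].
have Q0 : Q != 0 by rewrite -size_poly_gt0 ltnW.
have [q0 r0] : q != 0 /\ r != 0 by apply/andP; rewrite -negb_or -mulf_eq0 mulrC -defQ.
have [/eqP/size_poly1P [c c0 rc] | sr1] := eqVneq (size r) 1%N.
  by rewrite defQ rc mul_polyC eqp_sym eqp_scale.
have sq : (1 < size q)%N by rewrite ltn_neqAle eq_sym sq1 size_poly_gt0.
have sr : (1 < size r)%N by rewrite ltn_neqAle eq_sym sr1 size_poly_gt0.
have sQ_eq : size Q = (size r + size q).-1 by rewrite defQ size_mul.
have ltq : (size q < size Q)%N by rewrite sQ_eq -subn1 ltn_subRL ltn_add2r.
have ltr : (size r < size Q)%N by rewrite sQ_eq -subn1 ltn_subRL addnC ltn_add2l.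
have epsQ_le M : fle le (epsilon le nu r) M -> fle le (epsilon le nu q) M ->
    fle le (epsilon le nu Q) M.
  by rewrite defQ; exact: epsilon_mul_le.
case/orP: (fle_total Hle (epsilon le nu r) (epsilon le nu q)) => h.
  by have := key q sq (epsQ_le _ h (fle_refl Hle _)); rewrite leqNgt ltq.
by have := key r sr (epsQ_le _ (fle_refl Hle _) h); rewrite leqNgt ltr.
Qed.
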